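(* Let $\mathcal A^\Psi=\Psi\circ\mathcal A\circ\Psi^{-1}$. Then $\Psi$ maps $\mathcal T_0(\mathrm{OP})$ bijectively onto $I^{\mathcal D}\times I^{\mathbb N}_\infty$, and for all $f\in I^{\mathcal D}$ and $\alpha\in I^{\mathbb N}_\infty$, $$\mathcal A^\Psi(f,\alpha)=\bigl(f(\,\cdot\,+\tau^{-1}(\mathbb O[\alpha]-\alpha)),\ \mathbb O[\alpha]\bigr).$$
   Context: Let $I=\{0,1\}$. The graded graph $\mathrm{OP}$ has vertex sets $\mathrm{OP}_0=I$, $\mathrm{OP}_{n+1}=\mathrm{OP}_n\times\mathrm{OP}_n$; for $v=(v_0,v_1)\in\mathrm{OP}_{n+1}$ there is an edge of index $0$ from $v_0$ to $v$ and an edge of index $1$ from $v_1$ to $v$ (two distinct edges if $v_0=v_1$), and no other edges. $\mathcal T(\mathrm{OP})$ is the set of infinite paths $x=(v_0,e_0,v_1,e_1,\dots)$, $v_n\in\mathrm{OP}_n$, $e_n$ an edge from $v_n$ to $v_{n+1}$. A path is determined by its vertex on floor $N$ and the indices of its edges below floor $N$. The adic transformation $\mathcal A$ is defined on paths having at least one edge of index $0$: if $e_n$ is the first edge of $x$ with index $0$, then $\mathcal Ax$ coincides with $x$ from floor $n+1$ on, its edge from floor $n$ to $n+1$ has index $1$, and all its edges below floor $n$ have index $0$. $\mathcal T_0(\mathrm{OP})$ is the set of paths $x$ for which $\mathcal A^nx$ is defined for all $n\in\mathbb Z$. $\mathcal D=\bigoplus_{i\ge0}\mathbb Z/2\mathbb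 Z$ with generators $g_0,g_1,\dots$, $\mathcal D_n=\langle g_0,\dots,g_{n-1}\rangle$. $I^{\mathbb N}$ is the group of sequences $(\alpha_i)_{i\ge1}$ under coordinatewise addition mod 2; $\tau\colon\mathcal D\to I^{\mathbb N}$, $\tau(\sum_i\alpha_ig_{i-1})=(\alpha_i)_{i\ge1}$ (an injective homomorphism onto the finitely supported sequences). $I^{\mathbb N}_\infty$ is the set of sequences with infinitely many zeros and infinitely many ones. The odometer $\mathbb O$: if $\alpha_1=\dots=\alpha_{n-1}=1$ and $\alpha_n=0$, then $\mathbb O[\alpha]_i=0$ for $i<n$, $\mathbb O[\alpha]_n=1$, $\mathbb O[\alpha]_i=\alpha_i$ for $i>n$. $\Psi=(F,A)$: define $\Phi[v]\in I^{\mathcal D_n}$ for $v\in\mathrm{OP}_n$ by $\Phi[v](0)=v$ if $n=0$, and for $v=(v_0,v_1)\in\mathrm{OP}_{n+1}$, $\Phi[v](h)=\Phi[v_0](h)$ for $h\in\mathcal D_n$, $\Phi[v](h)=\Phi[v_1](g_n+h)$ for $h\in\mathcal D_{n+1}\setminus\mathcal D_n$. For a path $x$ with vertices $v_n$ and edges $e_n$, $A[x]=\alpha$ with $\alpha_n$ the index of $e_{n-1}$, and $F[x](g)=\Phi[v_n](g+\sum_{i=0}^{n-1}\alpha_{i+1}g_i)$ for $g\in\mathcal D_n$, $n\ge1$. $\Psi[x]=(F[x],A[x])$ is a homeomorphism $\mathcal T(\mathrm{OP})\to I^{\mathcal D}\times I^{\mathbb N}$. *)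

From Stdlib Require Import Arith ZArith Bool List.

Fixpoint OPv (n : nat) : Type :=
  match n with
  | 0 => bool
  | S m => (OPv m * OPv m)%type
  end.

Definition comp (n : nat) (i : bool) (v : OPv (S n)) : OPv n :=
  if i then snd v else fst v.

(* An infinite path: vertices pv n : OP_n and edge indices pe n (the index of
   the edge e_n from floor n to floor n+1).  An edge of index i from v_n to
   v_{n+1} exists iff the i-th component of v_{n+1} is v_n, and the edge is
   determined by (v_{n+1}, i). *)
Record path := {
  pv : forall n, OPv n;
  pe : nat -> bool;
  pok : forall n, comp n (pe n) (pv (S n)) = pv n
}.

(* D = (+)_{i>=0} Z/2 is encoded as nat: sum_i a_i g_i <-> sum_i a_i 2^i,
   group law = bitwise xor, g_i = 2^i, D_n = {h | h < 2^n}. *)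
Definition Dadd (g h : nat) : nat := Nat.lxor g h.
Definition gen (i : nat) : nat := 2 ^ i.

(* Sequences alpha = (alpha_i)_{i>=1} in I^N are encoded as a : nat -> bool
   with a k = alpha_{k+1}. *)

(* tau (sum_i alpha_i g_{i-1}) = (alpha_i)_{i>=1}; in our encodings this is
   the bit sequence. *)
Definition tau (h : nat) : nat -> bool := fun k => Nat.testbit h k.

Definition Inf (a : nat -> bool) : Prop :=
  (forall N, exists k, N <= k /\ a k = false) /\
  (forall N, exists k, N <= k /\ a k = true).

(* Odometer: if alpha_1 = ... = alpha_{n-1} = 1, alpha_n = 0 then
   O[alpha]_i = 0 (i<n), 1 (i=n), alpha_i (i>n).  Equivalently, bit k is
   flipped iff all earlier bits are 1. *)
Definition odo (a : nat -> bool) : nat -> bool :=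
  fun k => if forallb a (seq 0 k) then negb (a k) else a k.

(* Phi[v] in I^{D_n}; values outside D_n are irrelevant (never used). *)
Fixpoint Phi (n : nat) : OPv n -> nat -> bool :=
  match n return OPv n -> nat -> bool with
  | 0 => fun v _ => v
  | S m => fun v h =>
      if h <? 2 ^ m then Phi m (fst v) h
      else Phi m (snd v) (Dadd (gen m) h)
  end.

Fixpoint bitsum (n : nat) (a : nat -> bool) : nat :=
  match n with
  | 0 => 0
  | S m => bitsum m a + (if a m then gen m else 0)
  end.

(* A[x] = alpha with alpha_n = index of e_{n-1}, i.e. (encoded) a k = pe x k *)
Definition Aof (x : path) : nat -> bool := pe x.

(* F[x](g) = Phi[v_n](g + sum_{i<n} alpha_{i+1} g_i) for g in D_n, n >= 1;
   we use n = g+1 (g < 2^(g+1)); the value is independent of the choice. *)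
Definition Fof (x : path) : nat -> bool :=
  fun g => Phi (S g) (pv x (S g)) (Dadd g (bitsum (S g) (pe x))).

Definition Psi (x : path) : (nat -> bool) * (nat -> bool) := (Fof x, Aof x).

(* Adic transformation, as a (functional) relation: Adic x y  <->  y = A x. *)
Definition Adic (x y : path) : Prop :=
  exists n,
    pe x n = false /\ (forall k, k < n -> pe x k = true) /\
    pe y n = true /\ (forall k, k < n -> pe y k = false) /\
    (forall k, n < k -> pe y k = pe x k) /\
    (forall m, n < m -> pv y m = pv x m).

Definition T0 (x : path) : Prop :=
  exists y : Z -> path, y 0%Z = x /\ forall k : Z, Adic (y k) (y (k + 1)%Z).

From Stdlib Require Import Arith ZArith Bool List Lia.
From Stdlib Require Import Classical ClassicalEpsilon FunctionalExtensionality ProofIrrelevance.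

(* A vertex of [OP_n] is the same thing as a function [D_n -> I] (via [Phi]), and the
   vertex [v_n] of a path is [F[x]] translated by the partial sum [sum_(i<n) alpha_(i+1) g_i];
   hence a path is determined by [Psi x], and every pair [(f, alpha)] is attained.  If the
   first zero of [alpha] is at [n], the adic step flips the digits [0..n] of [alpha], i.e.
   applies the odometer, and keeps the vertices above floor [n]; keeping them forces [F] to
   be translated by [g_0 + ... + g_n = tau^-1(O[alpha] - alpha)].  Finally, [A] raises the
   partial sums below any floor [N] above its pivot by one, so a bi-infinite orbit cannot have
   a tail of ones (or of zeros) from [N] on, as the partial sum below [N] stays in [[0, 2^N)]. *)

Lemma lt_pow2_bits x m : x < 2 ^ m <-> forall i, m <= i -> Nat.testbit x i = false.
Proof.
  split.
  - intros Hx i Hi. destruct (Nat.eq_dec x 0) as [->|Hx0]; [apply Nat.bits_0|].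
    apply Nat.bits_above_log2. apply Nat.log2_lt_pow2 in Hx; lia.
  - intros Hbits. replace x with (x mod 2 ^ m).
    + apply Nat.mod_upper_bound, Nat.pow_nonzero; lia.
    + apply Nat.bits_inj; intro i. destruct (Nat.lt_ge_cases i m).
      * now rewrite Nat.mod_pow2_bits_low.
      * now rewrite Nat.mod_pow2_bits_high, Hbits.
Qed.

Lemma lt_pow2_succ n : n < 2 ^ S n.
Proof. pose proof (Nat.pow_gt_lin_r 2 (S n)); lia. Qed.

(** * The group [D] *)

Definition digit (m : nat) (b : bool) : nat := if b then gen m else 0.

Lemma testbit_Dadd g h i : Nat.testbit (Dadd g h) i = xorb (Nat.testbit g i) (Nat.testbit h i).
Proof. apply Nat.lxor_spec. Qed.

Lemma testbit_digit m b i : Nat.testbit (digit m b) i = (m =? i) && b.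
Proof.
  destruct b; simpl.
  - rewrite andb_true_r. apply Nat.pow2_bits_eqb.
  - rewrite andb_false_r. apply Nat.bits_0.
Qed.

Lemma Dadd_assoc g h k : Dadd g (Dadd h k) = Dadd (Dadd g h) k.
Proof. symmetry; apply Nat.lxor_assoc. Qed.

Lemma Dadd_comm g h : Dadd g h = Dadd h g.
Proof. apply Nat.lxor_comm. Qed.

Lemma Dadd_0_r g : Dadd g 0 = g.
Proof. apply Nat.lxor_0_r. Qed.

Lemma Dadd_K g h : Dadd (Dadd g h) h = g.
Proof. unfold Dadd. now rewrite Nat.lxor_assoc, Nat.lxor_nilpotent, Nat.lxor_0_r. Qed.

Lemma Dadd_lt g h m : g < 2 ^ m -> h < 2 ^ m -> Dadd g h < 2 ^ m.
Proof.
  rewrite !lt_pow2_bits. intros Hg Hh i Hi. now rewrite testbit_Dadd, Hg, Hh.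
Qed.

Lemma Dadd_digit_lt h m b : h < 2 ^ m -> Dadd h (digit m b) < 2 ^ S m.
Proof.
  rewrite !lt_pow2_bits. intros Hh i Hi.
  rewrite testbit_Dadd, testbit_digit, Hh by lia.
  destruct (Nat.eqb_spec m i); [lia|reflexivity].
Qed.

Lemma lt_pow2_succ_digit h m : h < 2 ^ S m ->
  exists b h', h' < 2 ^ m /\ h = Dadd h' (digit m b).
Proof.
  intros Hh. exists (Nat.testbit h m), (Dadd h (digit m (Nat.testbit h m))).
  split; [|now rewrite Dadd_K].
  rewrite lt_pow2_bits in *. intros i Hi.
  rewrite testbit_Dadd, testbit_digit.
  destruct (Nat.eqb_spec m i) as [<-|]; simpl.
  - now destruct (Nat.testbit h m).
  - rewrite xorb_false_r. apply Hh. lia.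
Qed.

Lemma bitsum_lt n a : bitsum n a < 2 ^ n.
Proof. induction n; simpl; [lia|]. unfold gen. destruct (a n); lia. Qed.

Lemma bitsum_succ m a : bitsum (S m) a = Dadd (bitsum m a) (digit m (a m)).
Proof.
  apply Nat.add_nocarry_lxor, Nat.bits_inj; intro i.
  rewrite Nat.land_spec, testbit_digit, Nat.bits_0.
  destruct (Nat.eqb_spec m i) as [<-|]; [|now rewrite andb_false_r].
  now rewrite (proj1 (lt_pow2_bits _ _) (bitsum_lt m a)).
Qed.

Lemma testbit_bitsum n a i : Nat.testbit (bitsum n a) i = (i <? n) && a i.
Proof.
  induction n as [|n IH]; [apply Nat.bits_0|].
  rewrite bitsum_succ, testbit_Dadd, testbit_digit, IH.
  destruct (Nat.ltb_spec i n), (Nat.ltb_spec i (S n)), (Nat.eqb_spec n i);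
    subst; simpl; try lia; now destruct (a i).
Qed.

Lemma testbit_ones n i : Nat.testbit (Nat.ones (S n)) i = (i <=? n).
Proof.
  destruct (Nat.leb_spec i n).
  - apply Nat.ones_spec_low; lia.
  - apply Nat.ones_spec_high; lia.
Qed.

(** * Vertices of [OP] as functions on [D_n] *)

Lemma Phi_succ_digit m (v : OPv (S m)) b h : h < 2 ^ m ->
  Phi (S m) v (Dadd h (digit m b)) = Phi m (comp m b v) h.
Proof.
  intros Hh. destruct b; cbn [Phi comp digit].
  - destruct (Nat.ltb_spec (Dadd h (gen m)) (2 ^ m)) as [Hlt|_].
    + apply lt_pow2_bits with (i := m) in Hlt; [|lia].
      rewrite testbit_Dadd, (proj1 (lt_pow2_bits _ _) Hh m), Nat.pow2_bits_true in Hlt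
        by lia.
      discriminate.
    + now rewrite Dadd_comm, Dadd_K.
  - rewrite Dadd_0_r. now apply Nat.ltb_lt in Hh as ->.
Qed.

Lemma Phi_inj n (v w : OPv n) : (forall h, h < 2 ^ n -> Phi n v h = Phi n w h) -> v = w.
Proof.
  revert v w; induction n as [|n IH]; intros v w Hvw.
  - apply (Hvw 0). simpl; lia.
  - assert (Hcomp : forall b, comp n b v = comp n b w).
    { intros b. apply IH. intros h Hh.
      rewrite <- !Phi_succ_digit by exact Hh. now apply Hvw, Dadd_digit_lt. }
    destruct v, w. f_equal; [apply (Hcomp false) | apply (Hcomp true)].
Qed.

Fixpoint vertex_of (n : nat) : (nat -> bool) -> OPv n :=
  match n return (nat -> bool) -> OPv n with
  | 0 => fun phi => phi 0
  | S m => fun phi => (vertex_of m phi, vertex_of m (fun h => phi (Dadd h (gen m))))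
  end.

Lemma comp_vertex_of n b phi :
  comp n b (vertex_of (S n) phi) = vertex_of n (fun h => phi (Dadd h (digit n b))).
Proof.
  destruct b; [reflexivity|]. cbn. f_equal.
  apply functional_extensionality; intro h. now rewrite Dadd_0_r.
Qed.

Lemma Phi_vertex_of n phi h : h < 2 ^ n -> Phi n (vertex_of n phi) h = phi h.
Proof.
  revert phi h; induction n as [|n IH]; intros phi h Hh.
  - simpl in *. f_equal. lia.
  - destruct (lt_pow2_succ_digit h n Hh) as (b & h' & Hh' & ->).
    now rewrite Phi_succ_digit, comp_vertex_of, IH.
Qed.

(** * Paths of [OP] *)

Lemma Phi_pv_succ (x : path) m h : h < 2 ^ m ->
  Phi (S m) (pv x (S m)) (Dadd h (bitsum (S m) (pe x)))
  = Phi m (pv x m) (Dadd h (bitsum m (pe x))).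
Proof.
  intros Hh. rewrite bitsum_succ, Dadd_assoc, Phi_succ_digit, pok; [reflexivity|].
  apply Dadd_lt; [exact Hh | apply bitsum_lt].
Qed.

Lemma Fof_level (x : path) m g : g < 2 ^ m ->
  Fof x g = Phi m (pv x m) (Dadd g (bitsum m (pe x))).
Proof.
  assert (Hup : forall k m, g < 2 ^ m ->
    Phi m (pv x m) (Dadd g (bitsum m (pe x)))
    = Phi (k + m) (pv x (k + m)) (Dadd g (bitsum (k + m) (pe x)))).
  { intros k m' Hg. induction k as [|k IH]; [reflexivity|].
    rewrite IH. symmetry. apply Phi_pv_succ.
    apply (Nat.lt_le_trans _ _ _ Hg), Nat.pow_le_mono_r; lia. }
  intros Hg. unfold Fof.
  rewrite (Hup m (S g)), (Hup (S g) m), Nat.add_comm by (exact Hg || apply lt_pow2_succ).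
  reflexivity.
Qed.

Lemma pv_vertex_of (x : path) m :
  pv x m = vertex_of m (fun h => Fof x (Dadd h (bitsum m (pe x)))).
Proof.
  apply Phi_inj; intros h Hh.
  rewrite Phi_vertex_of, (Fof_level x m), Dadd_K by (exact Hh || apply Dadd_lt, bitsum_lt; exact Hh).
  reflexivity.
Qed.

Lemma path_eq_above (x y : path) N :
  pe x = pe y -> (forall m, N < m -> pv x m = pv y m) -> x = y.
Proof.
  intros He Hv.
  assert (Hall : forall k m, N < k + m -> pv x m = pv y m).
  { induction k as [|k IH]; intros m Hm; [apply Hv; lia|].
    rewrite <- (pok x m), <- (pok y m), He, (IH (S m)) by lia. reflexivity. }
  destruct x as [vx ex okx], y as [vy ey oky]; simpl in *; subst ey.
  assert (vx = vy) as <-.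
  { apply functional_extensionality_dep; intro m. apply (Hall (S N) m); lia. }
  f_equal. apply proof_irrelevance.
Qed.

Lemma Psi_inj (x y : path) : Psi x = Psi y -> x = y.
Proof.
  unfold Psi, Aof; intros H; injection H as HF He.
  apply (path_eq_above x y 0 He). intros m _.
  now rewrite !pv_vertex_of, HF, He.
Qed.

Definition path_vertex (f a : nat -> bool) (n : nat) : OPv n :=
  vertex_of n (fun h => f (Dadd h (bitsum n a))).

Lemma comp_path_vertex f a n : comp n (a n) (path_vertex f a (S n)) = path_vertex f a n.
Proof.
  unfold path_vertex. rewrite comp_vertex_of, bitsum_succ. f_equal.
  apply functional_extensionality; intro h.
  now rewrite (Dadd_comm (bitsum n a)), Dadd_assoc, Dadd_K.
Qed.

Definition mkpath (f a : nat -> bool) : path :=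
  {| pv := path_vertex f a; pe := a; pok := comp_path_vertex f a |}.

Lemma Psi_mkpath f a : Psi (mkpath f a) = (f, a).
Proof.
  unfold Psi, Aof, Fof; cbn [mkpath pv pe]. f_equal.
  apply functional_extensionality; intro g. unfold path_vertex.
  rewrite Phi_vertex_of, Dadd_K; [reflexivity|].
  apply Dadd_lt; [apply lt_pow2_succ | apply bitsum_lt].
Qed.

(** * The odometer and the adic transformation *)

Lemma first_index (a : nat -> bool) b : (exists k, a k = b) ->
  exists n, a n = b /\ forall j, j < n -> a j = negb b.
Proof.
  intros Hex.
  destruct (dec_inh_nat_subset_has_unique_least_element (fun k => a k = b))
    as (n & [Hn Hmin] & _); [intro k; destruct (a k), b; tauto | exact Hex |].
  exists n; split; [exact Hn|]. intros j Hj.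
  destruct (Bool.bool_dec (a j) b) as [E|E].
  - specialize (Hmin j E); lia.
  - destruct (a j), b; cbn; tauto.
Qed.

Lemma first_index_unique (a : nat -> bool) b n n' :
  a n = b -> (forall j, j < n -> a j = negb b) ->
  a n' = b -> (forall j, j < n' -> a j = negb b) -> n = n'.
Proof.
  intros Hn Hlow Hn' Hlow'.
  destruct (Nat.lt_total n n') as [H|[H|H]]; [|exact H|].
  - rewrite Hlow' in Hn by exact H. destruct b; discriminate.
  - rewrite Hlow in Hn' by exact H. destruct b; discriminate.
Qed.

Definition flip_upto (n : nat) (a : nat -> bool) : nat -> bool :=
  fun k => xorb (k <=? n) (a k).

Lemma flip_upto_involutive n a : flip_upto n (flip_upto n a) = a.
Proof.
  apply functional_extensionality; intro k. unfold flip_upto.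
  now destruct (k <=? n), (a k).
Qed.

Lemma odo_first_zero a n : a n = false -> (forall j, j < n -> a j = true) ->
  odo a = flip_upto n a.
Proof.
  intros Hn Hlow. apply functional_extensionality; intro k. unfold odo, flip_upto.
  replace (forallb a (seq 0 k)) with (k <=? n); [now destruct (k <=? n)|].
  symmetry. destruct (Nat.leb_spec k n).
  - apply forallb_forall. intros j Hj%in_seq. apply Hlow; lia.
  - apply not_true_iff_false. rewrite forallb_forall. intros Hall.
    rewrite Hall in Hn; [discriminate|]. apply in_seq; lia.
Qed.

Lemma bitsum_flip_upto n m a : n < m ->
  bitsum m (flip_upto n a) = Dadd (bitsum m a) (Nat.ones (S n)).
Proof.
  intros Hnm. apply Nat.bits_inj; intro i.
  rewrite testbit_Dadd, !testbit_bitsum, testbit_ones. unfold flip_upto.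
  destruct (Nat.ltb_spec i m), (Nat.leb_spec i n); simpl; try lia; now destruct (a i).
Qed.

(* Flipping the digits [0..n] of [A[x]] while translating [F[x]] by [g_0 + ... + g_n]
   leaves the vertices above floor [n] unchanged. *)
Definition adic_flip (x : path) (n : nat) : path :=
  mkpath (fun g => Fof x (Dadd g (Nat.ones (S n)))) (flip_upto n (pe x)).

Lemma pv_adic_flip x n m : n < m -> pv (adic_flip x n) m = pv x m.
Proof.
  intros Hnm. cbn [adic_flip mkpath pv]. unfold path_vertex.
  rewrite (pv_vertex_of x m), bitsum_flip_upto by exact Hnm. f_equal.
  apply functional_extensionality; intro h. now rewrite Dadd_assoc, Dadd_K.
Qed.

Lemma adic_flip_involutive x n : adic_flip (adic_flip x n) n = x.
Proof.
  apply (path_eq_above _ _ n); [apply flip_upto_involutive|].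
  intros m Hm. now rewrite !pv_adic_flip.
Qed.

Lemma Adic_adic_flip x n : pe x n = false -> (forall k, k < n -> pe x k = true) ->
  Adic x (adic_flip x n).
Proof.
  intros Hn Hlow. exists n. cbn [adic_flip mkpath pe]. unfold flip_upto.
  repeat split; [exact Hn | exact Hlow | | | | apply pv_adic_flip].
  - now rewrite Nat.leb_refl, Hn.
  - intros k Hk. rewrite Hlow by exact Hk.
    now replace (k <=? n) with true by (symmetry; apply Nat.leb_le; lia).
  - intros k Hk. now replace (k <=? n) with false by (symmetry; apply Nat.leb_gt; lia).
Qed.

Lemma Adic_unique x y y' : Adic x y -> Adic x y' -> y = y'.
Proof.
  intros (n & Hx & Hxlow & Hy & Hylow & Hyhigh & Hvy)
         (n' & Hx' & Hxlow' & Hy' & Hylow' & Hyhigh' & Hvy').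
  assert (n' = n) as -> by exact (first_index_unique _ false _ _ Hx' Hxlow' Hx Hxlow).
  apply (path_eq_above y y' n).
  - apply functional_extensionality; intro k.
    destruct (Nat.lt_total k n) as [H|[->|H]].
    + now rewrite Hylow, Hylow'.
    + now rewrite Hy, Hy'.
    + now rewrite Hyhigh, Hyhigh'.
  - intros m Hm. now rewrite Hvy, Hvy'.
Qed.

Lemma Psi_Adic (f a : nat -> bool) : Inf a -> forall x : path, Psi x = (f, a) ->
  exists d : nat,
    tau d = (fun k => xorb (odo a k) (a k)) /\
    (exists y : path, Adic x y) /\
    (forall y : path, Adic x y -> Psi y = ((fun g => f (Dadd g d)), odo a)).
Proof.
  intros [Hzeros _] x HPsi. injection HPsi as <- <-. unfold Aof.
  destruct (first_index (pe x) false) as (n & Hn & Hlow).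
  { destruct (Hzeros 0) as (k & _ & Hk). eauto. }
  rewrite (odo_first_zero _ n Hn Hlow).
  exists (Nat.ones (S n)). split; [|split].
  - apply functional_extensionality; intro k. unfold tau, flip_upto.
    rewrite testbit_ones. now destruct (k <=? n), (pe x k).
  - eauto using Adic_adic_flip.
  - intros y Hy. rewrite (Adic_unique _ _ _ Hy (Adic_adic_flip x n Hn Hlow)).
    apply Psi_mkpath.
Qed.

(** * [T_0(OP)] *)

Lemma Inf_flip_upto n a : Inf a -> Inf (flip_upto n a).
Proof.
  unfold flip_upto. intros [Hzeros Hones]; split; intros N.
  - destruct (Hzeros (N + S n)) as (k & Hk & Ha).
    exists k. split; [lia|]. replace (k <=? n) with false by (symmetry; apply Nat.leb_gt; lia).
    exact Ha.
  - destruct (Hones (N + S n)) as (k & Hk & Ha).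
    exists k. split; [lia|]. replace (k <=? n) with false by (symmetry; apply Nat.leb_gt; lia).
    exact Ha.
Qed.

Lemma Adic_succ_exists x : Inf (pe x) -> exists y, Adic x y /\ Inf (pe y).
Proof.
  intros HInf. destruct (first_index (pe x) false) as (n & Hn & Hlow).
  { destruct (proj1 HInf 0) as (k & _ & Hk). eauto. }
  exists (adic_flip x n). split; [exact (Adic_adic_flip x n Hn Hlow)|].
  now apply Inf_flip_upto.
Qed.

Lemma Adic_pred_exists x : Inf (pe x) -> exists y, Adic y x /\ Inf (pe y).
Proof.
  intros HInf. destruct (first_index (pe x) true) as (n & Hn & Hlow).
  { destruct (proj2 HInf 0) as (k & _ & Hk). eauto. }
  exists (adic_flip x n). split; [|now apply Inf_flip_upto].
  rewrite <- (adic_flip_involutive x n) at 2.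
  apply Adic_adic_flip; cbn [adic_flip mkpath pe]; unfold flip_upto.
  - now rewrite Nat.leb_refl, Hn.
  - intros k Hk. rewrite Hlow by exact Hk.
    now replace (k <=? n) with true by (symmetry; apply Nat.leb_le; lia).
Qed.

Definition adic_next (x : path) : path :=
  epsilon (inhabits x) (fun y => Adic x y /\ Inf (pe y)).

Definition adic_prev (x : path) : path :=
  epsilon (inhabits x) (fun y => Adic y x /\ Inf (pe y)).

Lemma adic_next_spec x : Inf (pe x) -> Adic x (adic_next x) /\ Inf (pe (adic_next x)).
Proof. intros HInf. exact (epsilon_spec _ _ (Adic_succ_exists x HInf)). Qed.

Lemma adic_prev_spec x : Inf (pe x) -> Adic (adic_prev x) x /\ Inf (pe (adic_prev x)).
Proof. intros HInf. exact (epsilon_spec _ _ (Adic_pred_exists x HInf)). Qed.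

Definition adic_orbit (x : path) (k : Z) : path :=
  if (0 <=? k)%Z then Nat.iter (Z.to_nat k) adic_next x
  else Nat.iter (Z.to_nat (- k)) adic_prev x.

Lemma T0_of_Inf x : Inf (pe x) -> T0 x.
Proof.
  intros HInf.
  assert (Hnext : forall j, Inf (pe (Nat.iter j adic_next x))).
  { induction j; [exact HInf|]. now apply adic_next_spec. }
  assert (Hprev : forall j, Inf (pe (Nat.iter j adic_prev x))).
  { induction j; [exact HInf|]. now apply adic_prev_spec. }
  exists (adic_orbit x). split; [reflexivity|]. intros k. unfold adic_orbit.
  destruct (Z.leb_spec 0 k), (Z.leb_spec 0 (k + 1)); try lia.
  - replace (Z.to_nat (k + 1)) with (S (Z.to_nat k)) by lia.
    apply adic_next_spec, Hnext.
  - replace k with (-1)%Z by lia. apply adic_prev_spec, HInf.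
  - replace (Z.to_nat (- k)) with (S (Z.to_nat (- (k + 1)))) by lia.
    apply adic_prev_spec, Hprev.
Qed.

Lemma bitsum_all_false n a : (forall k, k < n -> a k = false) -> bitsum n a = 0.
Proof. induction n as [|n IH]; intros Ha; [reflexivity|]. simpl. rewrite IH, Ha; auto. Qed.

Lemma bitsum_all_true n a : (forall k, k < n -> a k = true) -> S (bitsum n a) = 2 ^ n.
Proof.
  induction n as [|n IH]; intros Ha; [reflexivity|].
  simpl. rewrite Ha by lia. unfold gen. specialize (IH ltac:(auto)). lia.
Qed.

Lemma Adic_carry x y : Adic x y -> exists n,
  pe x n = false /\ pe y n = true /\ (forall k, n < k -> pe y k = pe x k) /\
  forall m, n < m -> bitsum m (pe y) = S (bitsum m (pe x)).
Proof.
  intros (n & Hx & Hxlow & Hy & Hylow & Hyhigh & _).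
  exists n. repeat split; [exact Hx | exact Hy | exact Hyhigh |].
  intros m Hm. induction m as [|m IH]; [lia|].
  destruct (Nat.eq_dec m n) as [->|Hmn]; simpl.
  - rewrite Hx, Hy, (bitsum_all_false n (pe y)) by exact Hylow.
    pose proof (bitsum_all_true n (pe x) Hxlow). unfold gen. lia.
  - rewrite IH, Hyhigh by lia. reflexivity.
Qed.

Lemma orbit_no_ones_tail (y : Z -> path) N :
  (forall k, Adic (y k) (y (k + 1)%Z)) -> ~ (forall k, N <= k -> pe (y 0%Z) k = true).
Proof.
  intros Hy Hones.
  assert (Hj : forall j, (forall k, N <= k -> pe (y (Z.of_nat j)) k = true) /\
                 bitsum N (pe (y (Z.of_nat j))) = j + bitsum N (pe (y 0%Z))).
  { induction j as [|j [Htail Hsum]]; [split; auto|].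
    destruct (Adic_carry _ _ (Hy (Z.of_nat j))) as (n & Hn0 & _ & Hhigh & Hcarry).
    replace (Z.of_nat (S j)) with (Z.of_nat j + 1)%Z by lia.
    assert (n < N).
    { destruct (Nat.lt_ge_cases n N) as [|HNn]; [assumption|].
      rewrite Htail in Hn0 by exact HNn. discriminate. }
    split.
    - intros k Hk. rewrite Hhigh by lia. auto.
    - rewrite Hcarry by assumption. lia. }
  destruct (Hj (2 ^ N)) as [_ Hsum].
  pose proof (bitsum_lt N (pe (y (Z.of_nat (2 ^ N))))). lia.
Qed.

Lemma orbit_no_zeros_tail (y : Z -> path) N :
  (forall k, Adic (y k) (y (k + 1)%Z)) -> ~ (forall k, N <= k -> pe (y 0%Z) k = false).
Proof.
  intros Hy Hzeros.
  assert (Hj : forall j, (forall k, N <= k -> pe (y (- Z.of_nat j)%Z) k = false) /\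
                 j + bitsum N (pe (y (- Z.of_nat j)%Z)) = bitsum N (pe (y 0%Z))).
  { induction j as [|j [Htail Hsum]]; [split; auto|].
    pose proof (Hy (- Z.of_nat (S j))%Z) as HA.
    replace (- Z.of_nat (S j) + 1)%Z with (- Z.of_nat j)%Z in HA by lia.
    destruct (Adic_carry _ _ HA) as (n & _ & Hn1 & Hhigh & Hcarry).
    assert (n < N).
    { destruct (Nat.lt_ge_cases n N) as [|HNn]; [assumption|].
      rewrite Htail in Hn1 by exact HNn. discriminate. }
    split.
    - intros k Hk. rewrite <- Hhigh by lia. auto.
    - rewrite Hcarry in Hsum by assumption. lia. }
  destruct (Hj (S (bitsum N (pe (y 0%Z))))) as [_ Hsum]. lia.
Qed.

Lemma T0_Inf x : T0 x -> Inf (pe x).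
Proof.
  intros (y & <- & Hy). split; intros N; apply NNPP; intros Hno.
  - apply (orbit_no_ones_tail y N Hy). intros k Hk.
    destruct (pe (y 0%Z) k) eqn:E; [reflexivity|]. exfalso. eauto.
  - apply (orbit_no_zeros_tail y N Hy). intros k Hk.
    destruct (pe (y 0%Z) k) eqn:E; [|reflexivity]. exfalso. eauto.
Qed.

Theorem proposition1 :
  (forall x : path, T0 x -> Inf (Aof x)) /\
  (forall x x' : path, T0 x -> T0 x' -> Psi x = Psi x' -> x = x') /\
  (forall (f : nat -> bool) (a : nat -> bool), Inf a ->
     exists x : path, T0 x /\ Psi x = (f, a)) /\
  (forall (f : nat -> bool) (a : nat -> bool), Inf a ->
     forall x : path, Psi x = (f, a) ->
       exists d : nat,
         tau d = (fun k => xorb (odo a k) (a k)) /\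
         (exists y : path, Adic x y) /\
         (forall y : path, Adic x y ->
            Psi y = ((fun g => f (Dadd g d)), odo a))).
Proof.
  split; [exact T0_Inf|].
  split; [intros x x' _ _; apply Psi_inj|].
  split; [|exact Psi_Adic].
  intros f a Ha. exists (mkpath f a).
  split; [exact (T0_of_Inf (mkpath f a) Ha) | apply Psi_mkpath].
Qed.
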